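(* Let $(M,\varphi,\xi,\eta,g)$ be a $3$-dimensional $f$-Kenmotsu manifold and let $\gamma(s)$ be a non-geodesic, arc-length parametrized proper triharmonic Frenet curve in $M$ with Frenet frame $\{T,N,B\}$, constant curvature $k_1$ and nonzero torsion $k_2$. Then $\gamma$ is a Frenet helix (i.e. $k_2$ is also constant). Further, with $A:=\frac r2+2(f^2+f')$ and $\Lambda:=\frac r2+3(f^2+f')$, $k_1$ and $k_2$ satisfy \begin{align*} &(k_1^2+k_2^2)^2=(2k_1^2+k_2^2)\big(A-\Lambda(\eta(T)^2+\eta(N)^2)\big)+k_1k_2\,\eta(T)\eta(B)\,\Lambda,\\ &\big(k_1k_2\eta(T)+(2k_1^2+k_2^2)\eta(B)\big)\Lambda\,\eta(N)=0. \end{align*}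
   Context: An almost contact metric manifold $(M^{2n+1},\varphi,\xi,\eta,g)$ has $\varphi^2=-I+\eta\otimes\xi$, $\eta(\xi)=1$, $\varphi\xi=0$, $\eta\circ\varphi=0$, $\eta(X)=g(X,\xi)$, $g(\varphi X,\varphi Y)=g(X,Y)-\eta(X)\eta(Y)$. It is $f$-Kenmotsu if $(\nabla_X\varphi)Y=f(g(\varphi X,Y)\xi-\eta(Y)\varphi X)$ and $\nabla_X\xi=f(X-\eta(X)\xi)$ for smooth $f$ with $df\wedge\eta=0$. In dimension 3 the curvature is $R(X,Y)Z=(\frac r2+2(f^2+f'))(g(Y,Z)X-g(X,Z)Y)-(\frac r2+3(f^2+f'))(g(Y,Z)\eta(X)\xi-g(X,Z)\eta(Y)\xi-\eta(X)\eta(Z)Y+\eta(Y)\eta(Z)X)$, with $r$ the scalar curvature and $f'$ the derivative of $f$ (regarded along the curve as functions of $s$). Frenet equations: $\nabla_TT=k_1N$, $\nabla_TN=-k_1T+k_2B$, $\nabla_TB=-k_2N$. A curve is triharmonic if $\tau_3(\gamma)=\nabla_T^5T+R(\nabla_T^3T,T)T-R(\nabla_T^2T,\nabla_TT)T=0$, and proper triharmonic if triharmonic but not harmonic (not a geodesic). A Frenet helix is a Frenet curve with constant nonzero curvature and torsion. *)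

From Stdlib Require Import Reals.
From Coquelicot Require Import Coquelicot.
Open Scope R_scope.

(* A vector field along the curve gamma(s), written in coordinates with
   respect to the Frenet frame {T, N, B} (orthonormal, so g is the dot
   product of coordinates). *)
Record fld := mkF { cT : R -> R; cN : R -> R; cB : R -> R }.

Definition Tf : fld := mkF (fun _ => 1) (fun _ => 0) (fun _ => 0).
Definition Nf : fld := mkF (fun _ => 0) (fun _ => 1) (fun _ => 0).
Definition Bf : fld := mkF (fun _ => 0) (fun _ => 0) (fun _ => 1).

Definition fadd (U V : fld) : fld :=
  mkF (fun s => cT U s + cT V s) (fun s => cN U s + cN V s)
      (fun s => cB U s + cB V s).
Definition fopp (U : fld) : fld :=
  mkF (fun s => - cT U s) (fun s => - cN U s) (fun s => - cB U s).
Definition fscal (c : R -> R) (U : fld) : fld :=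
  mkF (fun s => c s * cT U s) (fun s => c s * cN U s) (fun s => c s * cB U s).

Definition gm (U V : fld) (s : R) : R :=
  cT U s * cT V s + cN U s * cN V s + cB U s * cB V s.

(* Covariant derivative nabla_T along the curve, via the Frenet equations
   nabla_T T = k1 N, nabla_T N = -k1 T + k2 B, nabla_T B = -k2 N. *)
Definition covD (k1 : R -> R) (k2 : R -> R) (V : fld) : fld :=
  mkF (fun s => Derive (cT V) s - k1 s * cN V s)
      (fun s => Derive (cN V) s + k1 s * cT V s - k2 s * cB V s)
      (fun s => Derive (cB V) s + k2 s * cN V s).

Fixpoint covDn (k1 k2 : R -> R) (n : nat) (V : fld) : fld :=
  match n with O => V | S m => covD k1 k2 (covDn k1 k2 m V) end.

Definition eta (xi U : fld) (s : R) : R := gm U xi s.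

(* The curvature of a 3-dimensional f-Kenmotsu manifold:
   R(X,Y)Z = A (g(Y,Z)X - g(X,Z)Y)
           - L (g(Y,Z)eta(X)xi - g(X,Z)eta(Y)xi - eta(X)eta(Z)Y + eta(Y)eta(Z)X)
   with A = r/2 + 2(f^2+f'), L = r/2 + 3(f^2+f'). *)
Definition Acoef (r f : R -> R) (s : R) : R :=
  r s / 2 + 2 * (f s ^ 2 + Derive f s).
Definition Lcoef (r f : R -> R) (s : R) : R :=
  r s / 2 + 3 * (f s ^ 2 + Derive f s).

Definition curv (r f : R -> R) (xi X Y Z : fld) : fld :=
  fadd
    (fscal (Acoef r f)
       (fadd (fscal (gm Y Z) X) (fopp (fscal (gm X Z) Y))))
    (fopp (fscal (Lcoef r f)
       (fadd (fadd (fscal (fun s => gm Y Z s * eta xi X s) xi)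
                   (fopp (fscal (fun s => gm X Z s * eta xi Y s) xi)))
             (fadd (fopp (fscal (fun s => eta xi X s * eta xi Z s) Y))
                   (fscal (fun s => eta xi Y s * eta xi Z s) X))))).

Definition tau3 (k1 k2 r f : R -> R) (xi : fld) : fld :=
  fadd (fadd (covDn k1 k2 5 Tf) (curv r f xi (covDn k1 k2 3 Tf) Tf Tf))
       (fopp (curv r f xi (covDn k1 k2 2 Tf) (covDn k1 k2 1 Tf) Tf)).

Definition smooth_on (a b : R) (h : R -> R) : Prop :=
  forall s, a < s < b -> forall n, ex_derive_n h n s.

From Stdlib Require Import Reals Lra.
From Coquelicot Require Import Coquelicot.
Open Scope R_scope.

(* With k1 constant, the Frenet equations give nabla_T T = k1 N,
   nabla_T^2 T = -k1^2 T + k1 k2 B, nabla_T^3 T = -k1 (k1^2 + k2^2) N + k1 k2' B, and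
   the T-component of nabla_T^5 T is 5 k1^2 k2 k2'. The curvature terms of tau_3 have
   no T-component, so tau_3 = 0 forces k2 k2' = 0, hence k2' = 0 and k2 is constant by
   the mean value theorem. For constant k1, k2 the derivatives nabla_T^n T are obtained
   by iterating a constant linear map on Frenet coordinates, and the N- and B-components
   of tau_3 become k1 times the two stated equations. *)

Lemma locally_open_interval (a b s : R) :
  a < s < b -> locally s (fun t => a < t < b).
Proof.
  intros Hs. apply (open_and (fun t => a < t) (fun t => t < b)); auto.
  - apply open_gt.
  - apply open_lt.
Qed.

Lemma Derive_ext_open_interval (a b : R) (g h : R -> R) (s : R) :
  (forall t, a < t < b -> g t = h t) -> a < s < b -> Derive g s = Derive h s.
Proof.
  intros Hgh Hs. apply Derive_ext_loc.
  eapply filter_imp; [| apply (locally_open_interval a b s Hs)]. exact Hgh.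
Qed.

Lemma constant_on_of_Derive_zero (a b : R) (h : R -> R) :
  (forall t, a < t < b -> ex_derive h t) ->
  (forall t, a < t < b -> Derive h t = 0) ->
  forall s t, a < s < b -> a < t < b -> h s = h t.
Proof.
  intros Hder Hzero.
  assert (Hlt : forall s t, a < s < b -> a < t < b -> s < t -> h s = h t).
  { intros s t Hs Ht Hst.
    destruct (MVT_cor2 h (Derive h) s t) as [c [Hmvt Hc]]; [exact Hst | |].
    - intros c Hc. apply is_derive_Reals, Derive_correct, Hder. lra.
    - rewrite Hzero in Hmvt by lra. lra. }
  intros s t Hs Ht.
  destruct (Rtotal_order s t) as [Hst | [-> | Hts]]; auto.
  symmetry. auto.
Qed.

Definition coords (V : fld) (s : R) : R * R * R := (cT V s, cN V s, cB V s).

Lemma covDn_S (k1 k2 : R -> R) (n : nat) (V : fld) :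
  covDn k1 k2 (S n) V = covD k1 k2 (covDn k1 k2 n V).
Proof. reflexivity. Qed.

Lemma coords_covD_on (a b : R) (k1 k2 : R -> R) (V : fld) (u v w : R -> R) (s : R) :
  (forall t, a < t < b -> coords V t = (u t, v t, w t)) -> a < s < b ->
  coords (covD k1 k2 V) s =
    (Derive u s - k1 s * v s, Derive v s + k1 s * u s - k2 s * w s,
     Derive w s + k2 s * v s).
Proof.
  intros HV Hs. unfold coords; cbn.
  rewrite (Derive_ext_open_interval a b (cT V) u), (Derive_ext_open_interval a b (cN V) v),
    (Derive_ext_open_interval a b (cB V) w) by (auto; intros t Ht; now injection (HV t Ht)).
  now injection (HV s Hs) as -> -> ->.
Qed.

Lemma components_of_coords (V : fld) (s x y z : R) :
  coords V s = (x, y, z) -> cT V s = x /\ cN V s = y /\ cB V s = z.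
Proof. intros H. now injection H as -> -> ->. Qed.

Section VariableTorsion.

Variables (a b k1 : R) (k2 : R -> R).
Hypothesis k2_derivable : forall t, a < t < b -> ex_derive k2 t.

Notation nablaT n := (covDn (fun _ => k1) k2 n Tf).

Lemma coords_nablaT1 s : coords (nablaT 1) s = (0, k1, 0).
Proof.
  unfold coords; cbn. rewrite !Derive_const. f_equal; [f_equal|]; ring.
Qed.

Lemma coords_nablaT2 s : a < s < b -> coords (nablaT 2) s = (- k1 ^ 2, 0, k1 * k2 s).
Proof.
  intros Hs. rewrite covDn_S, (coords_covD_on a b _ _ _ (fun _ => 0) (fun _ => k1) (fun _ => 0));
    [| intros t _; apply coords_nablaT1 | exact Hs].
  rewrite !Derive_const. f_equal; [f_equal|]; ring.
Qed.

Lemma coords_nablaT3 s : a < s < b ->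
  coords (nablaT 3) s = (0, - k1 * (k1 ^ 2 + k2 s ^ 2), k1 * Derive k2 s).
Proof.
  intros Hs. rewrite covDn_S, (coords_covD_on a b _ _ _
    (fun _ => - k1 ^ 2) (fun _ => 0) (fun t => k1 * k2 t)); [| apply coords_nablaT2 | exact Hs].
  rewrite !Derive_const, Derive_scal. f_equal; [f_equal|]; ring.
Qed.

Lemma coords_nablaT4 s : a < s < b ->
  coords (nablaT 4) s =
    (k1 ^ 2 * (k1 ^ 2 + k2 s ^ 2), -3 * k1 * k2 s * Derive k2 s,
     k1 * Derive (Derive k2) s - k1 * k2 s * (k1 ^ 2 + k2 s ^ 2)).
Proof.
  intros Hs. rewrite covDn_S, (coords_covD_on a b _ _ _ (fun _ => 0)
    (fun t => - k1 * (k1 ^ 2 + k2 t ^ 2)) (fun t => k1 * Derive k2 t));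
    [| apply coords_nablaT3 | exact Hs].
  assert (D := k2_derivable s Hs).
  rewrite Derive_const, !Derive_scal, Derive_plus, Derive_const, Derive_pow; auto.
  - cbn. f_equal; [f_equal|]; ring.
  - apply ex_derive_const.
  - now apply ex_derive_pow.
Qed.

Lemma cT_nablaT5 s : a < s < b -> cT (nablaT 5) s = 5 * k1 ^ 2 * k2 s * Derive k2 s.
Proof.
  intros Hs.
  rewrite covDn_S. change (cT ?V s) with (fst (fst (coords V s))).
  rewrite (coords_covD_on a b _ _ _ (fun t => k1 ^ 2 * (k1 ^ 2 + k2 t ^ 2))
    (fun t => -3 * k1 * k2 t * Derive k2 t)
    (fun t => k1 * Derive (Derive k2) t - k1 * k2 t * (k1 ^ 2 + k2 t ^ 2)));
    [| apply coords_nablaT4 | exact Hs].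
  assert (D := k2_derivable s Hs).
  rewrite Derive_scal, Derive_plus, Derive_const, Derive_pow; auto.
  - cbn. ring.
  - apply ex_derive_const.
  - now apply ex_derive_pow.
Qed.

Lemma cT_tau3 (r f : R -> R) (xi : fld) s : a < s < b ->
  cT (tau3 (fun _ => k1) k2 r f xi) s = 5 * k1 ^ 2 * k2 s * Derive k2 s.
Proof.
  intros Hs. unfold tau3, curv, eta, gm. cbn [fadd fopp fscal cT cN cB Tf].
  rewrite cT_nablaT5 by exact Hs.
  destruct (components_of_coords _ _ _ _ _ (coords_nablaT1 s)) as (-> & -> & ->).
  destruct (components_of_coords _ _ _ _ _ (coords_nablaT2 s Hs)) as (-> & -> & ->).
  destruct (components_of_coords _ _ _ _ _ (coords_nablaT3 s Hs)) as (-> & -> & ->).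
  ring.
Qed.

End VariableTorsion.

Definition frenet_step (k1 k2 : R) (v : R * R * R) : R * R * R :=
  let '(x, y, z) := v in (- k1 * y, k1 * x - k2 * z, k2 * y).

Section ConstantTorsion.

Variables (a b k1 c : R) (k2 : R -> R).
Hypothesis k2_constant : forall t, a < t < b -> k2 t = c.

Notation nablaT n := (covDn (fun _ => k1) k2 n Tf).

Lemma coords_nablaT_constant_torsion n s : a < s < b ->
  coords (nablaT n) s = Nat.iter n (frenet_step k1 c) (1, 0, 0).
Proof.
  revert s; induction n as [| n IHn]; intros s Hs; [reflexivity |].
  rewrite Nat.iter_succ, covDn_S.
  destruct (Nat.iter n (frenet_step k1 c) (1, 0, 0)) as [[x y] z].
  rewrite (coords_covD_on a b _ _ _ (fun _ => x) (fun _ => y) (fun _ => z)) by auto.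
  rewrite !Derive_const, k2_constant by exact Hs. cbn. f_equal; [f_equal|]; ring.
Qed.

Lemma tau3_constant_torsion (r f : R -> R) (xi : fld) s : a < s < b ->
  let A := Acoef r f s in
  let L := Lcoef r f s in
  let eT := eta xi Tf s in
  let eN := eta xi Nf s in
  let eB := eta xi Bf s in
  cN (tau3 (fun _ => k1) k2 r f xi) s =
    k1 * ((k1 ^ 2 + c ^ 2) ^ 2
      - ((2 * k1 ^ 2 + c ^ 2) * (A - L * (eT ^ 2 + eN ^ 2)) + k1 * c * eT * eB * L)) /\
  cB (tau3 (fun _ => k1) k2 r f xi) s =
    k1 * ((k1 * c * eT + (2 * k1 ^ 2 + c ^ 2) * eB) * L * eN).
Proof.
  intros Hs. unfold tau3, curv, eta, gm. cbn [fadd fopp fscal cT cN cB Tf Nf Bf].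
  destruct (components_of_coords _ _ _ _ _
              (coords_nablaT_constant_torsion 1 s Hs)) as (-> & -> & ->).
  destruct (components_of_coords _ _ _ _ _
              (coords_nablaT_constant_torsion 2 s Hs)) as (-> & -> & ->).
  destruct (components_of_coords _ _ _ _ _
              (coords_nablaT_constant_torsion 3 s Hs)) as (-> & -> & ->).
  destruct (components_of_coords _ _ _ _ _
              (coords_nablaT_constant_torsion 5 s Hs)) as (_ & -> & ->).
  split; ring.
Qed.

End ConstantTorsion.

Theorem theorem2
  (a b : R) (k1 : R) (k2 r f : R -> R) (xi : fld) :
  a < b ->
  (* smoothness of the data along the curve *)
  smooth_on a b k2 -> smooth_on a b r -> smooth_on a b f ->
  smooth_on a b (cT xi) -> smooth_on a b (cN xi) -> smooth_on a b (cB xi) ->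
  (* xi is a unit vector field and nabla_T xi = f (T - eta(T) xi) *)
  (forall s, a < s < b -> gm xi xi s = 1) ->
  (forall s, a < s < b ->
     cT (covD (fun _ => k1) k2 xi) s = f s * (1 - eta xi Tf s * cT xi s) /\
     cN (covD (fun _ => k1) k2 xi) s = f s * (0 - eta xi Tf s * cN xi s) /\
     cB (covD (fun _ => k1) k2 xi) s = f s * (0 - eta xi Tf s * cB xi s)) ->
  (* non-geodesic, constant curvature k1, nonzero torsion *)
  k1 <> 0 ->
  (forall s, a < s < b -> k2 s <> 0) ->
  (* triharmonic: tau_3 = 0 *)
  (forall s, a < s < b ->
     cT (tau3 (fun _ => k1) k2 r f xi) s = 0 /\
     cN (tau3 (fun _ => k1) k2 r f xi) s = 0 /\
     cB (tau3 (fun _ => k1) k2 r f xi) s = 0) ->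
  (forall s t, a < s < b -> a < t < b -> k2 s = k2 t) /\
  (forall s, a < s < b ->
     let A := Acoef r f s in
     let L := Lcoef r f s in
     let eT := eta xi Tf s in
     let eN := eta xi Nf s in
     let eB := eta xi Bf s in
     (k1 ^ 2 + k2 s ^ 2) ^ 2
       = (2 * k1 ^ 2 + k2 s ^ 2) * (A - L * (eT ^ 2 + eN ^ 2))
         + k1 * k2 s * eT * eB * L /\
     (k1 * k2 s * eT + (2 * k1 ^ 2 + k2 s ^ 2) * eB) * L * eN = 0).
Proof.
  (* tau_3 involves r, f and xi only pointwise. *)
  intros _ k2_smooth _ _ _ _ _ _ _ k1_nz k2_nz tau3_zero.
  assert (k2_derivable : forall t, a < t < b -> ex_derive k2 t)
    by (intros t Ht; exact (k2_smooth t Ht 1%nat)).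
  assert (k2_stationary : forall s, a < s < b -> Derive k2 s = 0).
  { intros s Hs. destruct (tau3_zero s Hs) as [Hzero _].
    rewrite (cT_tau3 a b k1 k2 k2_derivable r f xi s Hs) in Hzero.
    assert (coef_nz : 5 * k1 ^ 2 * k2 s <> 0).
    { repeat apply Rmult_integral_contrapositive_currified; auto using pow_nonzero; lra. }
    destruct (Rmult_integral _ _ Hzero); [contradiction | assumption]. }
  assert (k2_constant := constant_on_of_Derive_zero a b k2 k2_derivable k2_stationary).
  split; [exact k2_constant |].
  intros s Hs.
  destruct (tau3_constant_torsion a b k1 (k2 s) k2
              (fun t Ht => k2_constant t s Ht Hs) r f xi s Hs) as [EN EB].
  destruct (tau3_zero s Hs) as (_ & HN & HB).
  rewrite EN in HN. rewrite EB in HB. cbv zeta.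
  split.
  - destruct (Rmult_integral _ _ HN); [contradiction | lra].
  - destruct (Rmult_integral _ _ HB); [contradiction | lra].
Qed.
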